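(* The sequence $(c_n)_{n\ge1}$ satisfies $c_1=0$ and, for every $n\ge2$, $$c_n=c_{\lceil n/2\rceil}+c_{\lfloor n/2\rfloor}+\lceil n/2\rceil-\lfloor n/2\rfloor;$$ equivalently, $c_{2n}=2c_n$ and $c_{2n+1}=c_{n+1}+c_n+1$ for every $n\ge1$.
   Context: Bifurcating trees: rooted trees in which every internal node has exactly two children; $\mathcal{T}_n$ is the set of isomorphism classes of bifurcating trees with $n$ leaves. For a node $w$, $\kappa_T(w)$ is its number of descendant leaves. The Colless index is $\mathcal{C}(T)=\sum_{v}|\kappa_T(v_1)-\kappa_T(v_2)|$, summed over internal nodes $v$ with children $v_1,v_2$; $c_n=\min\{\mathcal{C}(T):T\in\mathcal{T}_n\}$. *)

From mathcomp Require Import all_boot.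
Set Implicit Arguments. Unset Strict Implicit. Unset Printing Implicit Defensive.

(* Rooted bifurcating trees: every internal node has exactly two children.
   (Plane representatives; isomorphism classes are obtained by forgetting the
   order of children, which changes neither the number of leaves nor the
   Colless index.) *)
Inductive btree : Type :=
  | Leaf : btree
  | Node : btree -> btree -> btree.

Fixpoint leaves (t : btree) : nat :=
  match t with
  | Leaf => 1
  | Node l r => leaves l + leaves r
  end.

Definition absdiff (a b : nat) : nat := (a - b) + (b - a).

Fixpoint colless (t : btree) : nat :=
  match t with
  | Leaf => 0
  | Node l r => absdiff (leaves l) (leaves r) + colless l + colless r
  end.

(* m is the minimum Colless index over bifurcating trees with n leaves,
   i.e. m = c_n. *)
Definition is_min_colless (n m : nat) : Prop :=
  (exists t, leaves t = n /\ colless t = m) /\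
  (forall t, leaves t = n -> m <= colless t).

From mathcomp Require Import all_boot zify.

(* The minimal Colless index c_n is computed by the recursion
     cmin 1 = 0,  cmin n = cmin (uphalf n) + cmin n./2 + odd n  (n >= 2),
   i.e. by the maximally balanced tree, which splits its leaves as evenly as
   possible at every node. *)

Lemma even_or_odd n : exists p, n = p.*2 \/ n = p.*2.+1.
Proof. by exists n./2; lia. Qed.

Fixpoint cmin_fuel (k n : nat) : nat :=
  if k is k'.+1 then
    if n <= 1 then 0 else cmin_fuel k' (uphalf n) + cmin_fuel k' n./2 + odd n
  else 0.

Definition cmin (n : nat) : nat := cmin_fuel n n.

Lemma cmin_fuel_stable k k' n : n <= k -> n <= k' -> cmin_fuel k n = cmin_fuel k' n.
Proof.
elim: k k' n => [|k IH] [|k'] n //= hk hk'; try by have -> : n = 0 by lia.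
case: ifP => // /negbT hn.
by rewrite (IH k' (uphalf n)) ?(IH k' n./2) //; lia.
Qed.

Lemma cmin0 : cmin 0 = 0. Proof. by []. Qed.

Lemma cmin1 : cmin 1 = 0. Proof. by []. Qed.

Lemma cmin_rec n : 2 <= n -> cmin n = cmin (uphalf n) + cmin n./2 + odd n.
Proof.
case: n => [|k] //= hk; rewrite /cmin /=.
have -> : (k.+1 <= 1) = false by lia.
by rewrite (@cmin_fuel_stable k (uphalf k.+1)) ?(@cmin_fuel_stable k k.+1./2) //; lia.
Qed.

Lemma cmin_double m : cmin m.*2 = (cmin m).*2.
Proof.
case: m => [|m]; first by [].
rewrite cmin_rec; last lia.
by rewrite uphalf_double doubleK odd_double addn0 addnn.
Qed.

Lemma cmin_double_succ m : 0 < m -> cmin m.*2.+1 = cmin m.+1 + cmin m + 1.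
Proof.
move=> hm; rewrite cmin_rec; last lia.
have -> : uphalf m.*2.+1 = m.+1 by lia.
have -> : m.*2.+1./2 = m by lia.
by rewrite /= odd_double.
Qed.

Definition subadd_at (a b : nat) : Prop :=
  cmin (a + b) <= cmin a + cmin b + absdiff a b.

Lemma subadd_atC a b : subadd_at a b -> subadd_at b a.
Proof. by rewrite /subadd_at /absdiff addnC [cmin a + _]addnC [_ - _ + _]addnC. Qed.

Lemma subadd_even_even p q : subadd_at p q -> subadd_at p.*2 q.*2.
Proof. by rewrite /subadd_at -doubleD !cmin_double /absdiff; lia. Qed.

Lemma subadd_even_odd p q :
  0 < p -> subadd_at p q.+1 -> subadd_at p q -> subadd_at p.*2 q.*2.+1.
Proof.
rewrite /subadd_at => hp hq1 hq.
rewrite addnS -doubleD cmin_double_succ ?cmin_double; last lia.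
case: q hq1 hq => [|q] hq1 hq.
- by move: hq1; rewrite addn0 addn1 cmin1 /absdiff; lia.
- rewrite cmin_double_succ //; move: hq1 hq; rewrite !addnS /absdiff; lia.
Qed.

Lemma subadd_odd_odd p q :
  subadd_at p.+1 q -> subadd_at p q.+1 -> subadd_at p.*2.+1 q.*2.+1.
Proof.
rewrite /subadd_at => hp1 hq1.
rewrite addSn addnS -doubleD -doubleS cmin_double -addnS.
case: p hp1 hq1 => [|p] hp1 hq1; case: q hp1 hq1 => [|q] hp1 hq1.
- by [].
- rewrite add0n cmin1 (@cmin_double_succ q.+1) //.
  by move: hp1; rewrite add1n cmin1 /absdiff; lia.
- rewrite addn1 cmin1 (@cmin_double_succ p.+1) //.
  by move: hq1; rewrite addn1 cmin1 /absdiff; lia.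
- rewrite (@cmin_double_succ p.+1) ?(@cmin_double_succ q.+1) //.
  by move: hp1 hq1; rewrite !addSn !addnS /absdiff; lia.
Qed.

Lemma cmin_subadd a b : subadd_at a b.
Proof.
have [s] := ubnP (a + b); elim: s a b => // s IH a b hs.
have IHs x y : x + y < s -> subadd_at x y by move=> hxy; apply: IH.
case: a hs => [|a] hs; first by rewrite /subadd_at cmin0 add0n; lia.
case: b hs => [|b] hs; first by rewrite /subadd_at cmin0 addn0; lia.
have [p [ea|ea]] := even_or_odd a.+1; have [q [eb|eb]] := even_or_odd b.+1;
  rewrite ea eb; rewrite ea eb in hs.
- by apply: subadd_even_even; apply: IHs; lia.
- by apply: subadd_even_odd; try apply: IHs; lia.
- by apply: subadd_atC; apply: subadd_even_odd; try apply: IHs; lia.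
- by apply: subadd_odd_odd; apply: IHs; lia.
Qed.

Lemma cmin_le_colless t : cmin (leaves t) <= colless t.
Proof.
elim: t => //= l hl r hr.
by have := cmin_subadd (leaves l) (leaves r); rewrite /subadd_at; lia.
Qed.

Lemma balanced_tree n : 0 < n -> exists t, leaves t = n /\ colless t = cmin n.
Proof.
have [s] := ubnP n; elim: s n => // s IH n hs hn.
have [hn1|hn2] := leqP n 1; first by exists Leaf; have -> : n = 1 by lia.
have [tu [lu cu]] := IH (uphalf n) ltac:(lia) ltac:(lia).
have [th [lh ch]] := IH n./2 ltac:(lia) ltac:(lia).
exists (Node tu th) => /=; rewrite lu lh cu ch (cmin_rec n hn2) /absdiff; lia.
Qed.

Lemma cmin_is_min n : 0 < n -> is_min_colless n (cmin n).
Proof.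
move=> hn; split; first exact: balanced_tree.
by move=> t <-; apply: cmin_le_colless.
Qed.

Lemma is_min_colless_unique n m m' :
  is_min_colless n m -> is_min_colless n m' -> m = m'.
Proof.
move=> [[t [lt ct]] hm] [[t' [lt' ct']] hm'].
by apply/eqP; rewrite eqn_leq -{1}ct' -{2}ct hm // hm'.
Qed.

Theorem corollary3 (c : nat -> nat)
  (hc : forall n, 1 <= n -> is_min_colless n (c n)) :
  c 1 = 0 /\
  (forall n, 2 <= n -> c n = c (uphalf n) + c n./2 + (uphalf n - n./2)) /\
  (forall n, 1 <= n -> c (n.*2) = (c n).*2 /\ c (n.*2.+1) = c n.+1 + c n + 1).
Proof.
have c_cmin n : 0 < n -> c n = cmin n.
  by move=> hn; apply: is_min_colless_unique (hc n hn) (cmin_is_min n hn).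
split; first by rewrite c_cmin.
split=> n hn.
- by rewrite !c_cmin ?(cmin_rec n hn); lia.
- by rewrite !c_cmin ?cmin_double ?cmin_double_succ //; lia.
Qed.
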